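(* For every normal-form term $E$ (in $\eta$-long form) and every ground type $t$: $\cdot\vdash E : t$ (declarative typing in the empty environment) holds if and only if $\cdot\vdash E\Leftarrow t$ (concrete algorithmic checking in the empty environment) holds.
   Context: Fix a set of type constructors, each with a fixed arity, and an infinite set of type variables. Base types are $B ::= \tau \mid C\,B_1\ldots B_k$; ground base types $b$ contain no type variables. Types are $T ::= B\mid B\to T$; ground types $t ::= b \mid b\to t$. A polytype is $\forall\tau_1\ldots\tau_n.T$. A component library $\Lambda$ is a finite map from component names $c$ to polytypes; the arity of $c$ is the number of arrows in $\Lambda(c)$. Substitutions $\sigma$ map type variables to base types (identity elsewhere). A bottom type $\bot$ is added; $\mathbf{B}_\bot$ = base types $\cup\{\bot\}$. $T'\sqsubseteq T$ iff $T'=\sigma T$ for some $\sigma$; $\bot\sqsubseteq B$ for all $B$; $\equiv$ is mutual $\sqsubseteq$. The bottom substitution $\sigma_\bot$ sends every type to $\bot$, and every substitution maps $\bot$ to $\bot$. $\mathrm{mgu}$ denotes the most general (simultaneous) unifier of a sequence of pairs of types, which is $\sigma_\bot$ if no proper unifier exists and the identity for the empty sequence. $\mathrm{fresh}(\forall\bar\tau.T)$ renames $\bar\tau$ to fresh variables. Type transformer: if $\mathrm{fresh}(\Lambda(c))=B'_1\to\cdots\to B'_m\to B'$ then $[\![c]\!](B_1,\ldots,B_m)=\sigma B'$ with $\sigma=\mathrm{mgu}(B_1,B'_1;\ldots;B_m,B'_m)$. Terms (in $\eta$-long form): application terms $e ::= x \mid c(e_1,\ldots,e_m)$ with $m$ the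 arity of $c$; normal-form terms $E ::= e\mid \lambda x.E$. A typing environment $\Gamma$ maps variables to ground base types. Declarative typing $\Gamma\vdash E:t$ ($t$ ground): (Var) if $\Gamma(x)=b$ then $\Gamma\vdash x:b$; (App) if $\Lambda(c)=\forall\bar\tau.T$, $\sigma T=b_1\to\cdots\to b_m\to b$ is ground and $\Gamma\vdash e_i:b_i$ for all $i$, then $\Gamma\vdash c(e_1,\ldots,e_m):b$; (Fun) if $\Gamma,x{:}b\vdash E:t$ then $\Gamma\vdash\lambda x.E : b\to t$. Concrete algorithmic inference $\Gamma\vdash e\Rightarrow B$: if $\Gamma(x)=b$ then $\Gamma\vdash x\Rightarrow b$; if $\Gamma\vdash e_i\Rightarrow B_i$ for all $i$ then $\Gamma\vdash c(e_1,\ldots,e_m)\Rightarrow [\![c]\!](B_1,\ldots,B_m)$. Concrete algorithmic checking $\Gamma\vdash E\Leftarrow t$: if $\Gamma,x{:}b\vdash E\Leftarrow t$ then $\Gamma\vdash\lambda x.E\Leftarrow b\to t$; if $\Gamma\vdash e\Rightarrow B$ and $b\sqsubseteq B$ then $\Gamma\vdash e\Leftarrow b$. *)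

From Stdlib Require Import List Arith.
Import ListNotations.
Set Implicit Arguments.

(* Type variables are natural numbers (an infinite set).             *)
Section Types.
Variable Con : Type.
Variable ar : Con -> nat.

Inductive btype : Type :=
| TV (n : nat)
| TC (c : Con) (l : list btype).

Fixpoint bvars (B : btype) : list nat :=
  match B with
  | TV n => [n]
  | TC _ l => flat_map bvars l
  end.

Fixpoint bwf (B : btype) : bool :=
  match B with
  | TV _ => true
  | TC c l => Nat.eqb (length l) (ar c) && forallb bwf l
  end.

Fixpoint bsubst (s : nat -> btype) (B : btype) : btype :=
  match B with
  | TV n => s n
  | TC c l => TC c (map (bsubst s) l)
  end.

Definition bground (B : btype) : Prop := bvars B = [].

Inductive ty : Type :=
| Base (B : btype)
| Arr (B : btype) (T : ty).

Fixpoint tvars (T : ty) : list nat :=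
  match T with
  | Base B => bvars B
  | Arr B T => bvars B ++ tvars T
  end.

Fixpoint twf (T : ty) : bool :=
  match T with
  | Base B => bwf B
  | Arr B T => bwf B && twf T
  end.

Fixpoint tsubst (s : nat -> btype) (T : ty) : ty :=
  match T with
  | Base B => Base (bsubst s B)
  | Arr B T => Arr (bsubst s B) (tsubst s T)
  end.

Fixpoint targs (T : ty) : list btype :=
  match T with
  | Base _ => []
  | Arr B T => B :: targs T
  end.

Fixpoint tres (T : ty) : btype :=
  match T with
  | Base B => B
  | Arr _ T => tres T
  end.

Definition tground (T : ty) : Prop := tvars T = [].

(* B_bot = base types + bottom; None = bottom *)
Definition btb := option btype.
Definition btb_vars (X : btb) : list nat :=
  match X with Some B => bvars B | None => [] end.

Definition subst := option (nat -> btype).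
Definition sigma_bot : subst := None.

Definition bapp (sg : subst) (X : btb) : btb :=
  match sg, X with
  | Some s, Some B => Some (bsubst s B)
  | _, _ => None
  end.

(* X ⊑ Y  iff  X = sigma Y for some sigma (this includes ⊥ ⊑ B via sigma_bot) *)
Definition sqle (X Y : btb) : Prop := exists sg : subst, X = bapp sg Y.

Definition unifies (sg : subst) (ps : list (btb * btb)) : Prop :=
  Forall (fun p => bapp sg (fst p) = bapp sg (snd p)) ps.

(* sigma is a most general unifier of ps; it is sigma_bot iff no proper
   unifier exists. (mgu's are unique only up to renaming.) *)
Definition is_mgu (ps : list (btb * btb)) (sg : subst) : Prop :=
  match sg with
  | Some s =>
      unifies (Some s) ps /\
      (forall s', unifies (Some s') ps ->
                  exists d : nat -> btype, forall n, s' n = bsubst d (s n))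
  | None => forall s', ~ unifies (Some s') ps
  end.

End Types.

Section Terms.
Variable Comp : Type.

Inductive aterm : Type :=
| Var (x : nat)
| App (c : Comp) (es : list aterm).

Inductive nterm : Type :=
| Ate (e : aterm)
| Lam (x : nat) (E : nterm).
End Terms.

(* Typing.  A component library Lam : Comp -> ty Con; the polytype of *)
(* c is  forall (all variables of Lam c). Lam c  (closed polytypes).  *)
Section Typing.
Variables Con Comp : Type.
Variable Lib : Comp -> ty Con.

Definition env := nat -> option (btype Con).
Definition empty_env : env := fun _ => None.
Definition upd (G : env) (x : nat) (b : btype Con) : env :=
  fun y => if Nat.eqb y x then Some b else G y.

Inductive adecl (G : env) : aterm Comp -> btype Con -> Prop :=
| D_Var x b : G x = Some b -> adecl G (Var Comp x) b
| D_App c es (s : nat -> btype Con) :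
    tground (tsubst s (Lib c)) ->
    Forall2 (adecl G) es (targs (tsubst s (Lib c))) ->
    adecl G (App c es) (tres (tsubst s (Lib c))).

Inductive decl (G : env) : nterm Comp -> ty Con -> Prop :=
| D_Base e b : adecl G e b -> decl G (Ate e) (Base b)
| D_Fun x E b t : decl (upd G x b) E t -> decl G (Lam x E) (Arr b t).

Definition pw_disjoint (ls : list (list nat)) : Prop :=
  forall i j, i <> j -> i < length ls -> j < length ls ->
    forall n, In n (nth i ls []) -> ~ In n (nth j ls []).

(* The type transformer [[c]] is
   rendered relationally:
   - fresh(Lib c) = rename (all) variables of Lib c injectively (rho) to
     variables not occurring in the argument types B_i; fresh variables
     are global, so the argument types of distinct subderivations have
     pairwise disjoint variables;
   - sigma = mgu(B1,B'1; ...; Bm,B'm), result sigma B'. *)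
Inductive infer (G : env) : aterm Comp -> btb Con -> Prop :=
| I_Var x b : G x = Some b -> infer G (Var Comp x) (Some b)
| I_App c es (Bs : list (btb Con)) (rho : nat -> nat) (sg : subst Con) :
    Forall2 (infer G) es Bs ->
    pw_disjoint (map (@btb_vars Con) Bs) ->
    (forall a b, rho a = rho b -> a = b) ->
    (forall n, In n (tvars (Lib c)) ->
       forall B, In B Bs -> ~ In (rho n) (btb_vars B)) ->
    length Bs = length (targs (Lib c)) ->
    is_mgu (combine Bs
              (map (@Some _) (targs (tsubst (fun n => TV Con (rho n)) (Lib c)))))
           sg ->
    infer G (App c es)
      (bapp sg (Some (tres (tsubst (fun n => TV Con (rho n)) (Lib c))))).

Inductive check (G : env) : nterm Comp -> ty Con -> Prop :=
| C_Fun x E b t : check (upd G x b) E t -> check G (Lam x E) (Arr b t)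
| C_Base e b B : infer G e B -> sqle (Some b) B -> check G (Ate e) (Base b).

End Typing.

(* Both directions rest on the principality of inference.  Soundness: every
   ground instance of an inferred type is declaratively derivable, since at an
   application the mgu unifies the argument types with the freshly renamed
   signature, so composing it with a ground instance yields a ground instance
   of the component's polytype.  Completeness: a declarative derivation of a
   ground type b yields an inferred type B with b an instance of B; at an
   application the instances of the argument types and the declarative
   instance of the signature act on disjoint variables (the renaming is
   fresh), hence merge into one unifier, so by Robinson's algorithm an mgu
   exists and b factors through it.  Checking against b is then exactly being
   an instance of the inferred type, and abstractions are handled pointwise. *)

From Stdlib Require Import List Arith Lia.
Import ListNotations.
Set Implicit Arguments.

Lemma Forall2_map_r {A B C} (P : A -> C -> Prop) (f : B -> C) l l' :
  Forall2 P l (map f l') <-> Forall2 (fun x y => P x (f y)) l l'.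
Proof.
  revert l'; induction l; intros [|y l']; simpl; split; intros H; inversion H; subst;
    constructor; auto; apply IHl; auto.
Qed.

Lemma Forall2_compose {A B C} (P : A -> B -> Prop) (Q : B -> C -> Prop) (R : A -> C -> Prop)
  l1 l2 l3 : (forall x y z, P x y -> Q y z -> R x z) ->
  Forall2 P l1 l2 -> Forall2 Q l2 l3 -> Forall2 R l1 l3.
Proof.
  intros HR H1; revert l3; induction H1; intros l3 H2; inversion H2; subst; eauto.
Qed.

Lemma Forall2_impl_in {A B} (P Q : A -> B -> Prop) l l' :
  (forall x y, In x l -> P x y -> Q x y) -> Forall2 P l l' -> Forall2 Q l l'.
Proof. intros H H1; induction H1; constructor; simpl in *; auto. Qed.

Lemma Forall2_combine {A B} (R : A -> B -> Prop) l l' :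
  Forall2 R l l' -> Forall (fun p => R (fst p) (snd p)) (combine l l').
Proof. intros H; induction H; simpl; constructor; auto. Qed.

Definition disjoint (l l' : list nat) : Prop := forall n, In n l -> ~ In n l'.

Lemma ordpairs_disjoint_pw_disjoint ls : ForallOrdPairs disjoint ls -> pw_disjoint ls.
Proof.
  induction 1 as [|l ls Hl Hls IH]; intros i j Hij Hi Hj n Hn Hn'; simpl in *; [lia|].
  rewrite Forall_forall in Hl.
  destruct i as [|i], j as [|j]; try lia.
  - apply (Hl (nth j ls [])) with n; auto. apply nth_In. lia.
  - apply (Hl (nth i ls [])) with n; auto. apply nth_In. lia.
  - apply (IH i j) with n; auto; lia.
Qed.

Section Substitution.
Variable Con : Type.
Notation bt := (btype Con).

Fixpoint btype_nested_ind (P : bt -> Prop) (HV : forall n, P (TV Con n))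
  (HC : forall c l, Forall P l -> P (TC c l)) (B : bt) : P B :=
  match B with
  | TV _ n => HV n
  | TC c l => HC c l ((fix all_P l := match l return Forall P l with
                         | [] => Forall_nil _
                         | B :: l => Forall_cons _ (@btype_nested_ind P HV HC B) (all_P l)
                         end) l)
  end.

Fixpoint bsize (B : bt) : nat :=
  match B with TV _ _ => 1 | TC _ l => S (list_sum (map bsize l)) end.

Lemma bsubst_bsubst (f g : nat -> bt) X :
  bsubst f (bsubst g X) = bsubst (fun k => bsubst f (g k)) X.
Proof.
  induction X using btype_nested_ind; simpl; auto.
  f_equal. rewrite map_map. induction H; simpl; f_equal; auto.
Qed.

Lemma bsubst_ext (f g : nat -> bt) X :
  (forall k, In k (bvars X) -> f k = g k) -> bsubst f X = bsubst g X.
Proof.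
  induction X using btype_nested_ind; simpl; intros Efg.
  - apply Efg; auto.
  - f_equal. induction H; simpl in *; auto.
    f_equal; [apply H | apply IHForall]; intros; apply Efg, in_or_app; auto.
Qed.

Lemma bsubst_TV X : bsubst (TV Con) X = X.
Proof.
  induction X using btype_nested_ind; simpl; auto.
  f_equal. induction H; simpl; f_equal; auto.
Qed.

Lemma in_bvars_bsubst (f : nat -> bt) X m :
  In m (bvars (bsubst f X)) <-> exists k, In k (bvars X) /\ In m (bvars (f k)).
Proof.
  induction X using btype_nested_ind; simpl.
  - split; [intros; exists n; auto | intros [k [[<-|[]] Hk]]; auto].
  - induction H; simpl.
    + split; [intros [] | intros [k [[] _]]].
    + rewrite !in_app_iff, H, IHForall. split.
      * intros [[k [Hk Hm]]|[k [Hk Hm]]]; exists k; rewrite in_app_iff; auto.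
      * intros [k [Hk Hm]]; apply in_app_iff in Hk as [Hk|Hk]; [left|right]; exists k; auto.
Qed.

Lemma bvars_bsubst_nil (f : nat -> bt) X :
  (forall k, In k (bvars X) -> bvars (f k) = []) -> bvars (bsubst f X) = [].
Proof.
  intros Hf. destruct (bvars (bsubst f X)) as [|m r] eqn:E; auto.
  assert (Hm : In m (bvars (bsubst f X))) by (rewrite E; left; auto).
  apply in_bvars_bsubst in Hm as [k [Hk Hm]]. rewrite Hf in Hm; auto. destruct Hm.
Qed.

Lemma bsubst_closed (f : nat -> bt) X : bvars X = [] -> bsubst f X = X.
Proof.
  intros HX. rewrite <- (bsubst_TV X) at 2. apply bsubst_ext. rewrite HX. intros _ [].
Qed.

Lemma bsize_bsubst_var (u : nat -> bt) n X :
  In n (bvars X) -> bsize (u n) <= bsize (bsubst u X).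
Proof.
  induction X using btype_nested_ind; simpl.
  - intros [<-|[]]; auto.
  - intros Hn. induction H; simpl in *; [destruct Hn|].
    apply in_app_iff in Hn as [Hn|Hn]; [specialize (H Hn) | specialize (IHForall Hn)]; lia.
Qed.

Lemma occurs_check (u : nat -> bt) n X :
  In n (bvars X) -> X <> TV Con n -> u n <> bsubst u X.
Proof.
  intros Hn HX E. destruct X as [m|c l]; simpl in Hn.
  - destruct Hn as [<-|[]]. auto.
  - apply in_flat_map in Hn as [B [HB Hn]].
    assert (bsize (u n) <= bsize (bsubst u B)) by (apply bsize_bsubst_var; auto).
    assert (bsize (bsubst u B) <= list_sum (map bsize (map (bsubst u) l))).
    { clear -HB. induction l as [|B' l IH]; simpl in *; [destruct HB|].
      destruct HB as [->|HB]; [lia|]. specialize (IH HB); lia. }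
    apply (f_equal bsize) in E. simpl in E. lia.
Qed.

Definition subst1 n (t : bt) : nat -> bt := fun m => if Nat.eqb m n then t else TV Con m.

Lemma bsubst_subst1_notin n t X : ~ In n (bvars X) -> bsubst (subst1 n t) X = X.
Proof.
  intros Hn. rewrite <- (bsubst_TV X) at 2. apply bsubst_ext. intros k Hk. unfold subst1.
  destruct (Nat.eqb_spec k n); subst; tauto.
Qed.

Lemma bsubst_subst1_absorb (u : nat -> bt) n t k :
  u n = bsubst u t -> bsubst u (subst1 n t k) = u k.
Proof. intros Hn. unfold subst1. destruct (Nat.eqb_spec k n); subst; auto. Qed.

Lemma in_bvars_subst1 n t X m : ~ In n (bvars t) ->
  In m (bvars (bsubst (subst1 n t) X)) -> m <> n /\ (In m (bvars t) \/ In m (bvars X)).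
Proof.
  intros Hn Hm. apply in_bvars_bsubst in Hm as [k [Hk Hm]]. unfold subst1 in Hm.
  destruct (Nat.eqb_spec k n) as [->|Hkn].
  - split; [intros ->|]; auto.
  - destruct Hm as [<-|[]]. auto.
Qed.

Lemma in_bvars_shift N X m : In m (bvars (bsubst (fun n => TV Con (n + N)) X)) -> N <= m.
Proof. intros Hm. apply in_bvars_bsubst in Hm as [k [_ [<-|[]]]]. lia. Qed.

End Substitution.

Arguments bsize {Con} B.

Section Unification.
Variable Con : Type.
Notation bt := (btype Con).

Definition pvars (ps : list (bt * bt)) : list nat :=
  flat_map (fun p => bvars (fst p) ++ bvars (snd p)) ps.

Fixpoint psize (ps : list (bt * bt)) : nat :=
  match ps with [] => 0 | p :: ps => bsize (fst p) + bsize (snd p) + psize ps end.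

Definition nvars (ps : list (bt * bt)) : nat := length (nodup Nat.eq_dec (pvars ps)).

Definition unifier (u : nat -> bt) (ps : list (bt * bt)) : Prop :=
  Forall (fun p => bsubst u (fst p) = bsubst u (snd p)) ps.

Definition psubst (s : nat -> bt) (ps : list (bt * bt)) : list (bt * bt) :=
  map (fun p => (bsubst s (fst p), bsubst s (snd p))) ps.

(* The last clause is what keeps inferred types clear of variables reserved
   elsewhere. *)
Definition strong_mgu (ps : list (bt * bt)) (s : nat -> bt) : Prop :=
  unifier s ps /\
  (forall u, unifier u ps -> exists d, forall n, u n = bsubst d (s n)) /\
  (forall n, s n = TV Con n \/ incl (bvars (s n)) (pvars ps)).

Lemma pvars_cons X Y ps m :
  In m (pvars ((X, Y) :: ps)) <-> In m (bvars X) \/ In m (bvars Y) \/ In m (pvars ps).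
Proof. unfold pvars; simpl. rewrite !in_app_iff. tauto. Qed.

Lemma pvars_app ps ps' m : In m (pvars (ps ++ ps')) <-> In m (pvars ps) \/ In m (pvars ps').
Proof. unfold pvars. rewrite flat_map_app, in_app_iff. tauto. Qed.

Lemma in_pvars_combine l l' m : In m (pvars (combine l l')) ->
  In m (flat_map (@bvars Con) l) \/ In m (flat_map (@bvars Con) l').
Proof.
  revert l'; induction l as [|X l IH]; intros [|Y l']; simpl; auto.
  rewrite !in_app_iff. intros [[Hm|Hm]|Hm]; auto. apply IH in Hm. tauto.
Qed.

Lemma in_pvars_psubst1 n t ps m : ~ In n (bvars t) ->
  In m (pvars (psubst (subst1 n t) ps)) -> m <> n /\ In m (pvars ((TV Con n, t) :: ps)).
Proof.
  intros Hn Hm. unfold pvars, psubst in Hm. rewrite flat_map_concat_map, map_map,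
    <- flat_map_concat_map in Hm.
  apply in_flat_map in Hm as [[X Y] [Hp Hm]]. simpl in Hm.
  assert (Hps : In m (bvars X ++ bvars Y) -> In m (pvars ps))
    by (intros; apply in_flat_map; exists (X, Y); auto).
  apply in_app_iff in Hm as [Hm|Hm]; apply in_bvars_subst1 in Hm as [Hmn [Hm|Hm]]; auto;
    split; auto; rewrite pvars_cons; right;
    first [left; assumption | right; apply Hps, in_app_iff; auto].
Qed.

Lemma nvars_incl_le ps ps' : incl (pvars ps) (pvars ps') -> nvars ps <= nvars ps'.
Proof.
  intros H. apply NoDup_incl_length; [apply NoDup_nodup|].
  intros x. rewrite !nodup_In. auto.
Qed.

Lemma nvars_incl_lt ps ps' n : incl (pvars ps) (pvars ps') ->
  In n (pvars ps') -> ~ In n (pvars ps) -> nvars ps < nvars ps'.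
Proof.
  intros H Hn Hn'. unfold nvars.
  eapply Nat.le_lt_trans; [| apply (remove_length_lt Nat.eq_dec); rewrite nodup_In; exact Hn].
  apply NoDup_incl_length; [apply NoDup_nodup|].
  intros x Hx. rewrite nodup_In in Hx. apply in_in_remove; [congruence|]. rewrite nodup_In; auto.
Qed.

Lemma unifier_cons u X Y ps :
  unifier u ((X, Y) :: ps) <-> bsubst u X = bsubst u Y /\ unifier u ps.
Proof. unfold unifier. rewrite Forall_cons_iff. tauto. Qed.

Lemma unifier_ext u u' ps : (forall k, u k = u' k) -> unifier u ps -> unifier u' ps.
Proof.
  intros E. apply Forall_impl. intros p Hp.
  rewrite <- (bsubst_ext u u' (fst p)), <- (bsubst_ext u u' (snd p)); auto.
Qed.

Lemma unifier_psubst u s ps :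
  unifier u (psubst s ps) <-> unifier (fun k => bsubst u (s k)) ps.
Proof.
  unfold unifier, psubst. rewrite Forall_map. simpl.
  split; apply Forall_impl; intros p; rewrite !bsubst_bsubst; auto.
Qed.

Lemma unifier_combine u l l' : length l = length l' ->
  (unifier u (combine l l') <-> map (bsubst u) l = map (bsubst u) l').
Proof.
  revert l'; induction l as [|X l IH]; intros [|Y l'] Hl; simpl in *; try discriminate.
  - split; constructor.
  - rewrite unifier_cons, IH by lia. split; [intros [-> ->]; auto|].
    intros E; injection E; auto.
Qed.

Lemma psize_app ps ps' : psize (ps ++ ps') = psize ps + psize ps'.
Proof. induction ps; simpl; lia. Qed.

Lemma psize_combine l l' : length l = length l' ->
  psize (combine l l') = list_sum (map bsize l) + list_sum (map bsize l').
Proof.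
  revert l'; induction l as [|X l IH]; intros [|Y l'] Hl; simpl in *; try discriminate; auto.
  rewrite IH; lia.
Qed.

Lemma strong_mgu_nil : strong_mgu [] (TV Con).
Proof.
  split; [constructor | split; auto]. intros u _. exists u. auto.
Qed.

Lemma strong_mgu_swap X Y ps s : strong_mgu ((X, Y) :: ps) s -> strong_mgu ((Y, X) :: ps) s.
Proof.
  intros [Hs [Hg Hr]]. apply unifier_cons in Hs as [HXY Hps].
  split; [|split].
  - apply unifier_cons; auto.
  - intros u Hu. apply unifier_cons in Hu as [HYX Hu]. apply Hg, unifier_cons; auto.
  - intros k. destruct (Hr k) as [|Hk]; auto. right. intros m Hm.
    apply pvars_cons. apply Hk, pvars_cons in Hm. tauto.
Qed.

Lemma strong_mgu_trivial_pair X ps s : strong_mgu ps s -> strong_mgu ((X, X) :: ps) s.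
Proof.
  intros [Hs [Hg Hr]]. split; [|split].
  - apply unifier_cons; auto.
  - intros u Hu. apply unifier_cons in Hu as [_ Hu]. auto.
  - intros k. destruct (Hr k) as [|Hk]; auto. right. intros m Hm. apply pvars_cons. auto.
Qed.

Lemma strong_mgu_decompose c l l' ps s : length l = length l' ->
  strong_mgu (combine l l' ++ ps) s -> strong_mgu ((TC c l, TC c l') :: ps) s.
Proof.
  intros Hl [Hs [Hg Hr]]. unfold unifier in Hs, Hg. rewrite Forall_app in Hs.
  setoid_rewrite Forall_app in Hg. destruct Hs as [Hs1 Hs2]. split; [|split].
  - apply unifier_cons. split; auto. simpl. f_equal. apply unifier_combine; auto.
  - intros u Hu. apply unifier_cons in Hu as [E Hu]. simpl in E. injection E; intros E'.
    apply Hg. split; auto. apply unifier_combine; auto.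
  - intros k. destruct (Hr k) as [|Hk]; auto. right. intros m Hm.
    apply pvars_cons. apply Hk, pvars_app in Hm as [Hm|Hm]; auto.
    apply in_pvars_combine in Hm. simpl. tauto.
Qed.

Lemma strong_mgu_eliminate n t ps s : ~ In n (bvars t) ->
  strong_mgu (psubst (subst1 n t) ps) s ->
  strong_mgu ((TV Con n, t) :: ps) (fun k => bsubst s (subst1 n t k)).
Proof.
  intros Hn [Hs [Hg Hr]].
  assert (Hincl : incl (pvars (psubst (subst1 n t) ps)) (pvars ((TV Con n, t) :: ps)))
    by (intros m Hm; eapply in_pvars_psubst1; eauto).
  split; [|split].
  - apply unifier_cons. split; [|apply unifier_psubst; auto]. simpl.
    unfold subst1 at 1. rewrite Nat.eqb_refl, <- bsubst_bsubst, bsubst_subst1_notin; auto.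
  - intros u Hu. apply unifier_cons in Hu as [Hnt Hu]. simpl in Hnt.
    destruct (Hg u) as [d Hd].
    { apply unifier_psubst. eapply unifier_ext; [|exact Hu].
      intros k. symmetry. apply bsubst_subst1_absorb; auto. }
    exists d. intros k. unfold subst1. destruct (Nat.eqb_spec k n) as [->|]; simpl; auto.
    rewrite Hnt, bsubst_bsubst. apply bsubst_ext; auto.
  - intros k. unfold subst1. destruct (Nat.eqb_spec k n) as [->|]; simpl.
    + right. intros m Hm. apply in_bvars_bsubst in Hm as [j [Hj Hm]].
      destruct (Hr j) as [E|E].
      * rewrite E in Hm. destruct Hm as [<-|[]]. simpl. rewrite in_app_iff. auto.
      * apply Hincl, E, Hm.
    + destruct (Hr k) as [|E]; auto. right. intros m Hm. apply Hincl, E, Hm.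
Qed.

Lemma strong_mgu_var_pair n t ps :
  t <> TV Con n -> (exists u, unifier u ((TV Con n, t) :: ps)) ->
  (forall ps', nvars ps' < nvars ((TV Con n, t) :: ps) ->
     (exists u, unifier u ps') -> exists s, strong_mgu ps' s) ->
  exists s, strong_mgu ((TV Con n, t) :: ps) s.
Proof.
  intros Ht [u Hu] IH. apply unifier_cons in Hu as [Hnt Hu]. simpl in Hnt.
  assert (Hocc : ~ In n (bvars t)) by (intros Hn; exact (occurs_check u Hn Ht Hnt)).
  destruct (IH (psubst (subst1 n t) ps)) as [s Hs].
  - apply nvars_incl_lt with n.
    + intros m Hm. eapply in_pvars_psubst1; eauto.
    + apply pvars_cons. simpl. auto.
    + intros Hm. eapply in_pvars_psubst1 in Hm; [tauto | auto].
  - exists u. apply unifier_psubst. eapply unifier_ext; [|exact Hu].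
    intros k. symmetry. apply bsubst_subst1_absorb; auto.
  - eexists. apply strong_mgu_eliminate; eauto.
Qed.

Lemma shift_unifier (d s0 : nat -> bt) N Bs As :
  (forall B k, In B Bs -> In k (bvars B) -> k < N) ->
  Forall2 (fun B A => bsubst d B = bsubst s0 A) Bs As ->
  exists u, unifier u (combine Bs (map (bsubst (fun n => TV Con (n + N))) As)) /\
    forall X, bsubst u (bsubst (fun n => TV Con (n + N)) X) = bsubst s0 X.
Proof.
  intros HN Hargs. set (u := fun k => if N <=? k then s0 (k - N) else d k).
  assert (Hu_shift : forall X, bsubst u (bsubst (fun n => TV Con (n + N)) X) = bsubst s0 X).
  { intros X. rewrite bsubst_bsubst. apply bsubst_ext. intros k _. simpl. unfold u.
    destruct (Nat.leb_spec N (k + N)); [f_equal|]; lia. }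
  exists u. split; auto.
  apply (Forall2_combine (R := fun X Y => bsubst u X = bsubst u Y)), Forall2_map_r.
  eapply Forall2_impl_in; [|exact Hargs]. simpl. intros B A HB E.
  rewrite Hu_shift, <- E. apply bsubst_ext. intros k Hk. unfold u.
  destruct (Nat.leb_spec N k); auto. specialize (HN B k HB Hk). lia.
Qed.

(* Termination of Robinson's algorithm: eliminating a variable lowers [nvars],
   every other step keeps it and lowers [psize]. *)
Theorem unifiable_strong_mgu ps : (exists u, unifier u ps) -> exists s, strong_mgu ps s.
Proof.
  revert ps. enough (H : forall k m ps, nvars ps < k -> psize ps < m ->
            (exists u, unifier u ps) -> exists s, strong_mgu ps s) by eauto.
  induction k as [|k IHk]; intros m; [lia|].
  induction m as [|m IHm]; intros [|[X Y] ps] Hk Hm Hex; try lia.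
  { exists (TV Con). apply strong_mgu_nil. }
  assert (Hvar : forall n t, t <> TV Con n ->
            incl (pvars ((TV Con n, t) :: ps)) (pvars ((X, Y) :: ps)) ->
            (exists u, unifier u ((TV Con n, t) :: ps)) ->
            exists s, strong_mgu ((TV Con n, t) :: ps) s).
  { intros n t Ht Hincl Hex'. apply strong_mgu_var_pair; auto.
    intros ps' Hlt. apply (IHk (S (psize ps'))); auto.
    pose proof (nvars_incl_le _ _ Hincl). lia. }
  destruct Hex as [u Hu]. pose proof Hu as Hu'. apply unifier_cons in Hu' as [HXY Hps].
  simpl in Hm. destruct X as [n|c l], Y as [n'|c' l'].
  - destruct (Nat.eq_dec n' n) as [->|Hn].
    + destruct (IHm ps) as [s Hs]; eauto.
      * eapply Nat.le_lt_trans; [|exact Hk]. apply nvars_incl_le.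
        intros z Hz. apply pvars_cons; auto.
      * simpl in Hm. lia.
      * exists s. apply strong_mgu_trivial_pair; auto.
    + apply Hvar; eauto; [congruence | apply incl_refl].
  - apply Hvar; eauto; [discriminate | apply incl_refl].
  - destruct (Hvar n' (TC c l)) as [s Hs]; [discriminate | | |].
    + intros z Hz. apply pvars_cons. apply pvars_cons in Hz. tauto.
    + exists u. apply unifier_cons; auto.
    + exists s. apply strong_mgu_swap; auto.
  - simpl in HXY. injection HXY as -> Hl.
    assert (Hlen : length l = length l')
      by (rewrite <- (length_map (bsubst u) l), Hl, length_map; auto).
    destruct (IHm (combine l l' ++ ps)) as [s Hs].
    + eapply Nat.le_lt_trans; [|exact Hk]. apply nvars_incl_le. intros z Hz.
      apply pvars_app in Hz as [Hz|Hz]; apply pvars_cons; auto.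
      apply in_pvars_combine in Hz. simpl. tauto.
    + rewrite psize_app, psize_combine by auto. simpl in Hm. lia.
    + exists u. unfold unifier. rewrite Forall_app. split; auto. apply unifier_combine; auto.
    + exists s. apply strong_mgu_decompose; auto.
Qed.

End Unification.

Section Typing.
Variables Con Comp : Type.
Variable Lib : Comp -> ty Con.
Notation bt := (btype Con).

Lemma tres_tsubst (f : nat -> bt) T : tres (tsubst f T) = bsubst f (tres T).
Proof. induction T; simpl; auto. Qed.

Lemma targs_tsubst (f : nat -> bt) T : targs (tsubst f T) = map (bsubst f) (targs T).
Proof. induction T; simpl; f_equal; auto. Qed.

Lemma tground_tsubst (f : nat -> bt) T : (forall k, bground (f k)) -> tground (tsubst f T).
Proof.
  unfold tground, bground. intros Hf.
  induction T; simpl; rewrite ?IHT, bvars_bsubst_nil; auto.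
Qed.

Lemma unifies_combine_Some (s : nat -> bt) (Xs : list (btb Con)) As :
  length Xs = length As -> unifies (Some s) (combine Xs (map (@Some _) As)) ->
  Forall2 (fun X A => exists B, X = Some B /\ bsubst s B = bsubst s A) Xs As.
Proof.
  revert As; induction Xs as [|X Xs IH]; intros [|A As] Hl Hu; simpl in *;
    try discriminate; constructor; inversion Hu as [|? ? HXA Hus]; subst; auto.
  destruct X as [B|]; simpl in HXA; [injection HXA; eauto | discriminate].
Qed.

Lemma is_mgu_strong_mgu (s : nat -> bt) Bs As : strong_mgu (combine Bs As) s ->
  is_mgu (combine (map (@Some _) Bs) (map (@Some _) As)) (Some s).
Proof.
  assert (E : forall u, unifies (Some u) (combine (map (@Some _) Bs) (map (@Some _) As))
                 <-> unifier u (combine Bs As)).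
  { intros u. revert As; induction Bs as [|B Bs IH]; intros [|A As]; simpl;
      try (split; intros; constructor; fail).
    unfold unifies, unifier in *. rewrite !Forall_cons_iff, IH. simpl.
    split; intros [H1 H2]; split; auto; [injection H1 | rewrite H1]; auto. }
  intros [Hs [Hg _]]. split; [apply E; auto|]. intros u Hu. apply Hg, E, Hu.
Qed.

Fixpoint adecl_nested_ind (G : env Con) (P : aterm Comp -> bt -> Prop)
  (HV : forall x b, G x = Some b -> P (Var Comp x) b)
  (HA : forall c es (s : nat -> bt), tground (tsubst s (Lib c)) ->
     Forall2 P es (targs (tsubst s (Lib c))) ->
     P (App c es) (tres (tsubst s (Lib c))))
  e b (H : adecl Lib G e b) {struct H} : P e b :=
  match H with
  | @D_Var _ _ _ _ x b Hx => HV x b Hx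
  | @D_App _ _ _ _ c es s Hg Hes =>
     HA c es s Hg
      ((fix all_P es Bs (h : Forall2 (adecl Lib G) es Bs) : Forall2 P es Bs :=
         match h with
         | @Forall2_nil _ _ _ => Forall2_nil _
         | @Forall2_cons _ _ _ e B _ _ h1 h2 =>
             Forall2_cons e B (@adecl_nested_ind G P HV HA e B h1) (all_P _ _ h2)
         end) es _ Hes)
  end.

Fixpoint infer_nested_ind (G : env Con) (P : aterm Comp -> btb Con -> Prop)
  (HV : forall x b, G x = Some b -> P (Var Comp x) (Some b))
  (HA : forall c es Bs (rho : nat -> nat) (sg : subst Con),
    Forall2 P es Bs ->
    length Bs = length (targs (Lib c)) ->
    is_mgu (combine Bs (map (@Some _) (targs (tsubst (fun n => TV Con (rho n)) (Lib c))))) sg ->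
    P (App c es) (bapp sg (Some (tres (tsubst (fun n => TV Con (rho n)) (Lib c))))))
  e X (H : infer Lib G e X) {struct H} : P e X :=
  match H with
  | @I_Var _ _ _ _ x b Hx => HV x b Hx
  | @I_App _ _ _ _ c es Bs rho sg Hes _ _ _ Hl Hm =>
     HA c es Bs rho sg
      ((fix all_P es Bs (h : Forall2 (infer Lib G) es Bs) : Forall2 P es Bs :=
         match h with
         | @Forall2_nil _ _ _ => Forall2_nil _
         | @Forall2_cons _ _ _ e X _ _ h1 h2 =>
             Forall2_cons e X (@infer_nested_ind G P HV HA e X h1) (all_P _ _ h2)
         end) es Bs Hes) Hl Hm
  end.

Definition ground_env (G : env Con) : Prop := forall x b, G x = Some b -> bground b.

Lemma ground_env_upd G x b : ground_env G -> bground b -> ground_env (upd G x b).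
Proof.
  intros HG Hb y b' Hy. unfold upd in Hy.
  destruct (Nat.eqb y x); [injection Hy as <-; auto | eauto].
Qed.

Lemma infer_sound G e X : ground_env G -> infer Lib G e X ->
  forall B, X = Some B -> forall d, (forall k, bground (d k)) -> adecl Lib G e (bsubst d B).
Proof.
  intros HG. revert e X.
  apply (infer_nested_ind (P := fun e X => forall B, X = Some B ->
           forall d, (forall k, bground (d k)) -> adecl Lib G e (bsubst d B)));
    [intros x b Hx | intros c es Bs rho sg IH Hlen Hmgu].
  - intros B EB d _. injection EB as <-. rewrite bsubst_closed by (eapply HG; eauto).
    constructor; auto.
  - intros B EB d Hd. destruct sg as [s|]; [|discriminate]. injection EB as <-.
    destruct Hmgu as [Hu _]. set (rp := fun n => TV Con (rho n)) in *.
    set (sc := fun k => bsubst d (s (rho k))).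
    replace (bsubst d (bsubst s (tres (tsubst rp (Lib c))))) with (tres (tsubst sc (Lib c)))
      by (rewrite !tres_tsubst, !bsubst_bsubst; reflexivity).
    constructor.
    + apply tground_tsubst. intros k. apply bvars_bsubst_nil. intros; apply Hd.
    + rewrite targs_tsubst. apply Forall2_map_r.
      assert (Hlen' : length Bs = length (targs (tsubst rp (Lib c))))
        by (rewrite targs_tsubst, length_map; exact Hlen).
      pose proof (unifies_combine_Some Bs _ Hlen' Hu) as HBs.
      rewrite targs_tsubst in HBs. apply Forall2_map_r in HBs.
      eapply Forall2_compose; [|exact IH|exact HBs]. simpl.
      intros e X A IHe [Bi [-> HBi]].
      replace (bsubst sc A) with (bsubst (fun k => bsubst d (s k)) Bi)
        by (rewrite <- bsubst_bsubst, HBi, !bsubst_bsubst; reflexivity).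
      apply IHe; auto. intros k. apply bvars_bsubst_nil. intros; apply Hd.
Qed.

(* Instances that are not ground at a variable of [B] are irrelevant, so they
   may be replaced by the ground type [bsubst s B] itself. *)
Lemma ground_instance (s : nat -> bt) B : bground (bsubst s B) ->
  exists d, (forall k, bground (d k)) /\ bsubst d B = bsubst s B.
Proof.
  intros HB. exists (fun k => match bvars (s k) with [] => s k | _ => bsubst s B end). split.
  - intros k. unfold bground. destruct (bvars (s k)) eqn:E; auto.
  - apply bsubst_ext. intros k Hk. destruct (bvars (s k)) as [|m ms] eqn:E; auto.
    exfalso. assert (Hm : In m (bvars (bsubst s B)))
      by (apply in_bvars_bsubst; exists k; rewrite E; simpl; auto).
    unfold bground in HB. rewrite HB in Hm. destruct Hm.
Qed.

Definition avoids (B : bt) (A : list nat) : Prop := disjoint (bvars B) A.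

Lemma strong_mgu_avoids ps (s : nat -> bt) X A : strong_mgu ps s ->
  disjoint (pvars ps) A -> avoids X A -> avoids (bsubst s X) A.
Proof.
  intros [_ [_ Hr]] Hps HX m Hm. apply in_bvars_bsubst in Hm as [k [Hk Hm]].
  destruct (Hr k) as [E|E].
  - rewrite E in Hm. destruct Hm as [<-|[]]. auto.
  - apply Hps, E, Hm.
Qed.

Lemma infer_app_principal G c es Bs (d s0 : nat -> bt) A :
  Forall2 (fun e B => infer Lib G e (Some B)) es Bs ->
  ForallOrdPairs disjoint (map (@bvars Con) Bs) ->
  (forall B, In B Bs -> avoids B A) ->
  Forall2 (fun B A0 => bsubst d B = bsubst s0 A0) Bs (targs (Lib c)) ->
  exists B, infer Lib G (App c es) (Some B) /\ avoids B A /\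
    exists d', bsubst s0 (tres (Lib c)) = bsubst d' B.
Proof.
  intros Hes Hdisj HA Hargs.
  set (N := S (list_max (A ++ flat_map (@bvars Con) Bs))).
  assert (HN : forall n, In n A \/ In n (flat_map (@bvars Con) Bs) -> n < N).
  { intros n Hn. apply Nat.lt_succ_r.
    pose proof (proj1 (list_max_le (A ++ flat_map (@bvars Con) Bs) _) (le_n _)) as Hmax.
    rewrite Forall_forall in Hmax. apply Hmax, in_or_app. auto. }
  destruct (shift_unifier d s0 (N := N) (Bs := Bs) (As := targs (Lib c))) as [u [Hu Hu_shift]];
    [intros B k HB Hk; apply HN; right; apply in_flat_map; eauto | exact Hargs |].
  set (rp := fun n => TV Con (n + N)) in *. rewrite <- targs_tsubst in Hu.
  destruct (unifiable_strong_mgu (ex_intro _ u Hu)) as [s Hs].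
  exists (bsubst s (tres (tsubst rp (Lib c)))). split; [|split].
  - change (Some (bsubst s (tres (tsubst rp (Lib c)))))
      with (bapp (Some s) (Some (tres (tsubst rp (Lib c))))).
    apply (@I_App _ _ Lib G c es (map (@Some _) Bs) (fun n => n + N) (Some s)).
    + apply Forall2_map_r. exact Hes.
    + rewrite map_map. apply ordpairs_disjoint_pw_disjoint. exact Hdisj.
    + intros a b E. lia.
    + intros n _ X HX Hin. apply in_map_iff in HX as [B [<- HB]].
      assert (n + N < N) by (apply HN; right; apply in_flat_map; eauto). lia.
    + rewrite !length_map. eapply Forall2_length; eauto.
    + apply is_mgu_strong_mgu. exact Hs.
  - apply (strong_mgu_avoids Hs).
    + intros n Hn HnA. apply in_pvars_combine in Hn as [Hn|Hn].
      * apply in_flat_map in Hn as [B [HB Hn]]. exact (HA B HB n Hn HnA).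
      * apply in_flat_map in Hn as [X [HX Hn]]. rewrite targs_tsubst in HX.
        apply in_map_iff in HX as [X' [<- _]]. apply in_bvars_shift in Hn.
        assert (n < N) by (apply HN; auto). lia.
    + intros n Hn HnA. rewrite tres_tsubst in Hn. apply in_bvars_shift in Hn.
      assert (n < N) by (apply HN; auto). lia.
  - destruct Hs as [_ [Hg _]]. destruct (Hg u Hu) as [d' Hd']. exists d'.
    rewrite tres_tsubst, <- Hu_shift, (bsubst_bsubst d'). apply bsubst_ext. auto.
Qed.

Lemma infer_args_principal G es bs :
  Forall2 (fun e b => forall A, exists B, infer Lib G e (Some B) /\ avoids B A /\
                                  exists d, b = bsubst d B) es bs ->
  forall A, exists Bs (d : nat -> bt), Forall2 (fun e B => infer Lib G e (Some B)) es Bs /\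
    ForallOrdPairs disjoint (map (@bvars Con) Bs) /\ (forall B, In B Bs -> avoids B A) /\
    Forall2 (fun B b => bsubst d B = b) Bs bs.
Proof.
  induction 1 as [|e b es bs He _ IH]; intros A.
  - exists [], (TV Con). repeat constructor. intros _ [].
  - destruct (IH A) as [Bs [d [Hes [Hdisj [HA Hbs]]]]].
    destruct (He (A ++ flat_map (@bvars Con) Bs)) as [B [HB [HBA [dB ->]]]].
    assert (HBBs : forall B', In B' Bs -> disjoint (bvars B) (bvars B')).
    { intros B' HB' n Hn Hn'. apply (HBA n Hn), in_or_app. right. apply in_flat_map. eauto. }
    exists (B :: Bs), (fun k => if in_dec Nat.eq_dec k (bvars B) then dB k else d k).
    split; [|split; [|split]].
    + constructor; auto.
    + constructor; auto. apply Forall_forall. intros l Hl.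
      apply in_map_iff in Hl as [B' [<- HB']]. auto.
    + intros B' [<-|HB'] n Hn HnA; [apply (HBA n Hn), in_or_app; auto | exact (HA B' HB' n Hn HnA)].
    + constructor.
      * apply bsubst_ext. intros k Hk. destruct (in_dec Nat.eq_dec k (bvars B)); tauto.
      * eapply Forall2_impl_in; [|exact Hbs]. simpl. intros B' b' HB' <-. apply bsubst_ext.
        intros k Hk. destruct (in_dec Nat.eq_dec k (bvars B)) as [Hk'|]; auto.
        exfalso. exact (HBBs B' HB' k Hk' Hk).
Qed.

Lemma adecl_complete G e b : ground_env G -> adecl Lib G e b ->
  forall A, exists B, infer Lib G e (Some B) /\ avoids B A /\ exists d, b = bsubst d B.
Proof.
  intros HG. revert e b.
  apply (adecl_nested_ind (P := fun e b => forall A, exists B, infer Lib G e (Some B) /\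
           avoids B A /\ exists d, b = bsubst d B));
    [intros x b Hx | intros c es s0 _ IH]; intros A.
  - exists b. split; [constructor; auto|split].
    + intros n Hn. rewrite (HG x b Hx) in Hn. destruct Hn.
    + exists (TV Con). rewrite bsubst_TV; auto.
  - destruct (infer_args_principal IH A) as [Bs [d [Hes [Hdisj [HA Hbs]]]]].
    rewrite tres_tsubst.
    apply (infer_app_principal c d s0 Hes Hdisj HA).
    rewrite targs_tsubst in Hbs. apply Forall2_map_r in Hbs. exact Hbs.
Qed.

Lemma decl_iff_check G E t : ground_env G -> tground t ->
  decl Lib G E t <-> check Lib G E t.
Proof.
  revert G t. induction E as [e|x E IH]; intros G t HG Ht.
  - split; intros H.
    + inversion H as [? b He|]; subst.
      destruct (adecl_complete HG He []) as [B [HB [_ [d ->]]]].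
      apply C_Base with (Some B); auto. exists (Some d). reflexivity.
    + inversion H as [|? b X HX [[s|] Hs]]; subst; [|discriminate].
      destruct X as [B|]; [|discriminate]. injection Hs as ->.
      destruct (ground_instance s B Ht) as [d [Hd <-]].
      constructor. eapply infer_sound; eauto.
  - destruct t as [b|b t]; [split; intros H; inversion H|].
    apply app_eq_nil in Ht as [Hb Ht].
    split; intros H; inversion H; subst; constructor; apply IH; auto using ground_env_upd.
Qed.

End Typing.

Theorem mainTheorem5 (Con Comp : Type) (ar : Con -> nat) (Lib : Comp -> ty Con)
  (Hfin : exists l : list Comp, forall c, In c l)
  (Hwf : forall c, twf ar (Lib c) = true)
  (E : nterm Comp) (t : ty Con) (Ht : tground t) (Htwf : twf ar t = true) :
  decl Lib (empty_env Con) E t <-> check Lib (empty_env Con) E t.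
Proof.
  apply decl_iff_check; auto. intros x b Hx. discriminate.
Qed.
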